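(* Let $p$ be an odd prime, let $n\geq m$ be positive integers, and let $G=\langle a,b\mid a^{p^n}=b^{p^m}=1,\ ab=ba\rangle\cong C_{p^n}\times C_{p^m}$. Then: \begin{enumerate} \item $G$ has exactly one irreducible rational representation of degree $1$ (up to equivalence). \item For each $r$ with $1\leq r\leq m$, $G$ has exactly $2\sum_{k=0}^{r-1}\phi(p^k)+\phi(p^r)=p^r+p^{r-1}$ inequivalent irreducible rational representations of degree $\phi(p^r)$. \item For each $r$ with $m<r\leq n$, $G$ has exactly $\sum_{k=0}^{m}\phi(p^k)=p^m$ inequivalent irreducible rational representations of degree $\phi(p^r)$. \end{enumerate}
   Context: $\phi$ denotes Euler's totient function. An irreducible rational representation means an irreducible representation over $\mathbb{Q}$. *)

From mathcomp Require Import all_boot all_order all_algebra all_fingroup all_solvable.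
From mathcomp Require Import gproduct mxrepresentation.
Set Implicit Arguments. Unset Strict Implicit. Unset Printing Implicit Defensive.

Definition irr_count_of_degree (F : fieldType) (gT : finGroupType)
    (G : {group gT}) (d N : nat) : Prop :=
  exists reps : 'I_N -> mx_representation F G d,
    [/\ forall i, mx_irreducible (reps i),
        forall i j, mx_rsim (reps i) (reps j) -> i = j
      & forall rG : mx_representation F G d, mx_irreducible rG ->
          exists i, mx_rsim rG (reps i)].

(* Let C be the companion matrix of Phi = sum_(k < p) X^(k p^e), the p^(e+1)-th
   cyclotomic polynomial, irreducible over Q of degree phi(p^(e+1)). As Phi has no
   proper factor, a nonzero vector and its images under C span the whole space, so a
   representation whose image contains C is irreducible.
   G is abelian, so an irreducible rational representation of G has cyclic image,
   generated by the image M of a or of b, and M is central. If M has order p^(e+1),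
   Schur's lemma makes M^(p^e) - 1 invertible, hence Phi(M) = 0, and a Krylov basis
   intertwines C with M: the representation is a |-> C^x, b |-> C^y with x = 1 or
   y = 1. Taking M to be the image of a whenever that has the largest order, the
   classes of degree phi(p^(e+1)) are the pairs (1, y) with y < p^(e+1) and
   p^(e+1) | y p^m, together with (p k, 1) for k < p^e when e < m; they are told apart
   by their kernels {a^u b^v | p^(e+1) divides x u + y v}. This gives p^(e+1) + p^e
   classes when e < m and p^m classes when m <= e < n. In degree 1 only the trivial
   representation is left, since a rational root of unity of odd order is 1. *)

From mathcomp Require Import all_boot all_order all_algebra all_fingroup all_solvable all_field.
From mathcomp Require Import gproduct mxrepresentation.
Set Implicit Arguments. Unset Strict Implicit. Unset Printing Implicit Defensive.
Import Order.TTheory GRing.Theory Num.Theory.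
Local Open Scope ring_scope.

Section PowersEqualToOne.
Variable R : nzRingType.
Implicit Types x : R.

Lemma expr_modn x q k : x ^+ q = 1 -> x ^+ (k %% q) = x ^+ k.
Proof. by move=> xq; rewrite {2}(divn_eq k q) exprD mulnC exprM xq expr1n mul1r. Qed.

Lemma expr_dvdn_eq1 x q k : x ^+ q = 1 -> (q %| k)%N -> x ^+ k = 1.
Proof. by move=> xq /dvdnP[c ->]; rewrite mulnC exprM xq expr1n. Qed.

Lemma expr_gcdn_eq1 x u v : x ^+ u = 1 -> x ^+ v = 1 -> x ^+ gcdn u v = 1.
Proof.
elim/ltn_ind: v u => [[|v]] IH u xu xv; first by rewrite gcdn0.
by rewrite -gcdn_modl gcdnC; apply: IH; rewrite ?ltn_mod ?expr_modn.
Qed.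

Lemma expr_pfactor_eq1 x p e k : prime p ->
  x ^+ (p ^ e.+1) = 1 -> x ^+ (p ^ e) != 1 -> (x ^+ k == 1) = (p ^ e.+1 %| k)%N.
Proof.
move=> p_pr xq xq'; apply/eqP/idP => [xk | /(expr_dvdn_eq1 xq)//].
have /(dvdn_pfactor _ _ p_pr)[j le_j Dg] := dvdn_gcdr k (p ^ e.+1).
have xj : x ^+ (p ^ j) = 1 by rewrite -Dg expr_gcdn_eq1.
have [lt_je | le_ej] := ltnP j e.+1.
  by case/negP: xq'; apply/eqP/(expr_dvdn_eq1 xj); rewrite dvdn_exp2l.
by rewrite (dvdn_trans _ (dvdn_gcdl k (p ^ e.+1))) // Dg dvdn_exp2l.
Qed.

Lemma exists_pfactor_order x p n : x ^+ (p ^ n) = 1 -> x != 1 ->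
  exists e, x ^+ (p ^ e.+1) = 1 /\ x ^+ (p ^ e) != 1.
Proof.
move=> + x_neq1; elim: n => [|n IH]; first by rewrite expr1 => x1; rewrite x1 eqxx in x_neq1.
by have [/IH | ] := eqVneq (x ^+ (p ^ n)) 1; last exists n.
Qed.

Lemma pfactor_cyclic_normal_form x (A B : R) p e (i j : nat) : prime p ->
    x ^+ (p ^ e.+1) = 1 -> x ^+ (p ^ e) != 1 -> A = x ^+ i -> B = x ^+ j ->
    (i == 1%N) || (j == 1%N) ->
  [/\ A ^+ (p ^ e.+1) = 1, A ^+ (p ^ e) != 1 & exists2 y, (y < p ^ e.+1)%N & B = A ^+ y]
  \/ (B = x /\ exists2 k, (k < p ^ e)%N & A = B ^+ (p * k)).
Proof.
move=> p_pr xq xq' DA DB ij1; set q := (p ^ e.+1)%N.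
have q_gt1 : (1 < q)%N by rewrite -[1%N](expn0 p) ltn_exp2l ?prime_gt1.
have Aq : A ^+ q = 1 by rewrite DA -exprM mulnC exprM xq expr1n.
have p_dvd_iE : (p %| i)%N = (A ^+ (p ^ e) == 1).
  rewrite DA -exprM (expr_pfactor_eq1 _ p_pr xq xq') expnSr mulnC.
  by rewrite dvdn_pmul2r ?expn_gt0 ?prime_gt0.
have [Ape | Ape'] := eqVneq (A ^+ (p ^ e)) 1; [right | left].
  have j1 : j = 1%N.
    case/orP: ij1 => /eqP // ij1.
    by rewrite DA ij1 expr1 in Ape; rewrite Ape eqxx in xq'.
  have DBx : B = x by rewrite DB j1 expr1.
  have p_dvd_q : (p %| q)%N by rewrite /q expnS dvdn_mulr.
  have /dvdnP[k Dk] : (p %| i %% q)%N.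
    have p_dvd_i : (p %| i)%N by rewrite p_dvd_iE Ape.
    by move: p_dvd_i; rewrite /dvdn (modn_dvdm _ p_dvd_q).
  split=> //; exists k.
    by rewrite -(ltn_pmul2r (prime_gt0 p_pr)) -Dk -expnSr ltn_mod expn_gt0 prime_gt0.
  by rewrite DA DBx -(expr_modn _ xq) Dk mulnC.
(* [u] inverts [i] modulo [q] by Euler's theorem, so [x] is a power of [A]. *)
split=> //; set u := (i ^ (totient q).-1)%N.
have xAu : x = A ^+ u.
  have cop_iq : coprime i q by rewrite coprime_pexpr // coprime_sym prime_coprime // p_dvd_iE.
  rewrite DA -exprM -expnS prednK ?totient_gt0 ?expn_gt0 ?prime_gt0 //.
  by rewrite -(expr_modn _ xq) Euler_exp_totient // modn_small // expr1.
by exists (u * j %% q)%N; rewrite ?ltn_mod ?expn_gt0 ?prime_gt0 // (expr_modn _ Aq) exprM -xAu.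
Qed.

End PowersEqualToOne.

Lemma odd_expr_eq1 (R : realDomainType) (c : R) k : odd k -> c ^+ k = 1 -> c = 1.
Proof.
move=> k_odd ck1; have c_gt0 : 0 < c by rewrite -(exprn_odd_gt0 _ k_odd) ck1 ltr01.
move/eqP: ck1; rewrite (ieexprn_weq1 _ (ltW c_gt0)) => /orP[/eqP k0 | /eqP //].
by rewrite k0 in k_odd.
Qed.

Lemma mx11_odd_expr_eq1 (R : realDomainType) (M : 'M[R]_1) k : odd k -> M ^+ k = 1 -> M = 1.
Proof.
move=> k_odd; rewrite [M]mx11_scalar -rmorphXn => /(congr1 (fun A : 'M_1 => A 0 0)).
by rewrite !mxE /= mulr1n => /(odd_expr_eq1 k_odd) ->.
Qed.

Lemma dvdn_addl_inj q y y' : (y < q)%N -> (y' < q)%N ->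
  (forall u, (q %| u + y) = (q %| u + y'))%N -> y = y'.
Proof.
move=> lt_yq lt_y'q eq_dvd; have := eq_dvd (q - y)%N.
rewrite subnK ?(ltnW lt_yq) // dvdnn => /esym q_dvd.
apply/eqP; rewrite -(modn_small lt_yq) -(modn_small lt_y'q) -(eqn_modDl (q - y)).
by rewrite subnK ?(ltnW lt_yq) // modnn eq_sym; apply: q_dvd.
Qed.

Lemma irredp_coprimep_small (F : fieldType) (P q : {poly F}) :
  irreducible_poly P -> q != 0 -> (size q < size P)%N -> coprimep P q.
Proof.
move=> irrP q_neq0 lt_qP; rewrite irreducible_poly_coprime //.
by apply: contraL lt_qP => /(dvdp_leq q_neq0); rewrite leqNgt.
Qed.

(* (X^(p^(e+1)) - 1) / (X^(p^e) - 1), the p^(e+1)-th cyclotomic polynomial *)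
Definition pcyclotomic (p e : nat) : {poly rat} := \sum_(k < p) 'X^(k * p ^ e).

Lemma horner_mx_pcyclotomic p e n (M : 'M[rat]_n.+1) :
  (M ^+ (p ^ e) - 1) * horner_mx M (pcyclotomic p e) = M ^+ (p ^ e.+1) - 1.
Proof.
rewrite rmorph_sum /=; under eq_bigr do rewrite rmorphXn /= horner_mx_X mulnC exprM.
by rewrite -subrX1 -exprM -expnSr.
Qed.

Section PrimePowerCyclotomic.
Variables (p e : nat).
Hypothesis p_pr : prime p.

Let pcyclotomic_split :
  pcyclotomic p e = 'X^(p.-1 * p ^ e) + \sum_(k < p.-1) 'X^(k * p ^ e).
Proof.
by rewrite /pcyclotomic; case: (p) (prime_gt0 p_pr) => // p' _; rewrite big_ord_recr addrC.
Qed.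

Let size_pcyclotomic_tail :
  (size (\sum_(k < p.-1) 'X^(k * p ^ e) : {poly rat})%R < size ('X^(p.-1 * p ^ e) : {poly rat}))%N.
Proof.
rewrite size_polyXn ltnS; apply: leq_trans (size_sum _ _ _) _.
apply/bigmax_leqP => i _; rewrite size_polyXn ltn_mul2r ltn_ord andbT.
by rewrite expn_gt0 prime_gt0.
Qed.

Let q_gt0 : (0 < p ^ e.+1)%N. Proof. by rewrite expn_gt0 prime_gt0. Qed.

Lemma size_pcyclotomic : size (pcyclotomic p e) = (totient (p ^ e.+1)).+1.
Proof.
by rewrite pcyclotomic_split (size_polyDl size_pcyclotomic_tail) size_polyXn totient_pfactor.
Qed.

Lemma pcyclotomic_monic : pcyclotomic p e \is monic.
Proof.
by rewrite pcyclotomic_split monicE (lead_coefDl size_pcyclotomic_tail) lead_coefXn.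
Qed.

Lemma pcyclotomic_irreducible : irreducible_poly (pcyclotomic p e).
Proof.
have [z prim_z] := C_prim_root_exists q_gt0.
have root_z : root (map_poly ratr (pcyclotomic p e)) z.
  have w_neq1 : z ^+ (p ^ e) - 1 != 0.
    by rewrite subr_eq0 -(prim_order_dvd prim_z) dvdn_Pexp2l ?prime_gt1 // ltnn.
  rewrite /root; have -> : (map_poly ratr (pcyclotomic p e)).[z] = \sum_(i < p) (z ^+ (p ^ e)) ^+ i.
    rewrite rmorph_sum horner_sum; apply: eq_bigr => i _.
    by rewrite rmorphXn /= map_polyX hornerXn mulnC exprM.
  have := subrX1 (z ^+ (p ^ e)) p; rewrite -exprM -expnSr prim_expr_order // subrr.
  by move/esym/eqP; rewrite mulf_eq0 (negPf w_neq1).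
have [mz [Dmz _] dvd_mz] := minCpolyP z.
have size_mz : size mz = size (pcyclotomic p e).
  rewrite -(size_map_poly (ratr : {rmorphism rat -> algC})) -Dmz.
  by rewrite (minCpoly_cyclotomic prim_z) size_cyclotomic size_pcyclotomic.
have P_neq0 : pcyclotomic p e != 0 by rewrite monic_neq0 ?pcyclotomic_monic.
split=> [|d size_d_neq1 dvd_d]; first by rewrite size_pcyclotomic ltnS totient_gt0 q_gt0.
have [h Dh] := dvdpP _ _ dvd_d.
have d_neq0 : d != 0 by apply: contraNneq P_neq0 => d0; rewrite Dh d0 mulr0.
have h_neq0 : h != 0 by apply: contraNneq P_neq0 => h0; rewrite Dh h0 mul0r.
move: root_z; rewrite {1}Dh rmorphM rootM dvd_mz dvd_mz => /orP[/(dvdp_leq h_neq0) | mz_dvd_d].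
  have := size_mul h_neq0 d_neq0; rewrite -Dh -size_mz => -> le_mz_h.
  have := size_poly_gt0 d; rewrite d_neq0.
  case: (size d) size_d_neq1 le_mz_h => [|[|k]] //= _ + _.
  by rewrite addnS /= -[X in (_ <= X)%N]addn0 leq_add2l.
by rewrite -dvdp_size_eqp // eqn_leq dvdp_leq //= -size_mz dvdp_leq.
Qed.
End PrimePowerCyclotomic.

Lemma horner_mx_poly (F : fieldType) n (M : 'M[F]_n.+1) k (E : nat -> F) :
  horner_mx M (\poly_(i < k) E i) = \sum_(i < k) E i *: M ^+ i.
Proof.
rewrite poly_def rmorph_sum; apply: eq_bigr => i _.
by rewrite -mul_polyC rmorphM /= horner_mx_C rmorphXn /= horner_mx_X -mulmxE mul_scalar_mx.
Qed.

Lemma mulmx_exp_intertwine (R : nzRingType) m n (A : 'M[R]_m) (B : 'M[R]_n)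
    (W : 'M[R]_(m, n)) k :
  A *m W = W *m B -> A ^+ k *m W = W *m B ^+ k.
Proof.
move=> AW; elim: k => [|k IH]; first by rewrite !expr0 mul1mx mulmx1.
by rewrite !exprS -!mulmxE -mulmxA IH !mulmxA AW.
Qed.

Definition krylov_mx (F : fieldType) d n (v : 'rV[F]_n) (M : 'M[F]_n) : 'M[F]_(d, n) :=
  \matrix_(i < d) (v *m M ^+ i).

Lemma krylov_mx_neq0 (F : fieldType) d n (v : 'rV[F]_n) (M : 'M[F]_n) :
  v != 0 -> krylov_mx d.+1 v M != 0.
Proof.
move=> v_neq0; apply: contraNneq v_neq0 => /(congr1 (row 0)).
by rewrite rowK expr0 mulmx1 row0 => ->.
Qed.

Section Companion.
Variables (F : fieldType) (N : nat) (P : {poly F}).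
Hypotheses (P_monic : P \is monic) (size_P : size P = N.+2).

Definition compan : 'M[F]_N.+1 :=
  \matrix_(i, j) (if (i < N)%N then ((j : nat) == i.+1)%:R else - P`_j).
Local Notation C := compan.

Lemma row_compan (i : 'I_N.+1) (lt_iN : (i < N)%N) :
  row i C = delta_mx 0 (Ordinal (lt_iN : (i.+1 < N.+1)%N)).
Proof. by apply/rowP => j; rewrite !mxE lt_iN. Qed.

Lemma row_compan_max : row ord_max C = - \row_j P`_j.
Proof. by apply/rowP => j; rewrite !mxE /= ltnn. Qed.

Lemma delta_mx_companX (k : 'I_N.+1) : delta_mx 0 0 *m C ^+ k = delta_mx 0 k :> 'rV_N.+1.
Proof.
case: k => k; elim: k => [|k IH] lt_k.
  by rewrite expr0 mulmx1; congr delta_mx; apply: val_inj.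
rewrite exprSr -mulmxE mulmxA (IH (ltnW lt_k)) -rowE (@row_compan (Ordinal (ltnW lt_k)) lt_k).
by congr delta_mx; apply: val_inj.
Qed.

Lemma horner_mx_monic n (M : 'M[F]_n.+1) :
  horner_mx M P = \sum_(i < N.+1) P`_i *: M ^+ i + M ^+ N.+1.
Proof.
rewrite -{1}[P]coefK horner_mx_poly size_P big_ord_recr /=; congr (_ + _).
by move: P_monic; rewrite monicE lead_coefE size_P => /eqP ->; rewrite scale1r.
Qed.

Lemma compan_root : horner_mx C P = 0.
Proof.
have row0_root : delta_mx 0 0 *m horner_mx C P = 0 :> 'rV_N.+1.
  rewrite horner_mx_monic mulmxDr mulmx_sumr.
  rewrite exprSr -mulmxE mulmxA (delta_mx_companX ord_max) -rowE row_compan_max.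
  under eq_bigr do rewrite -scalemxAr delta_mx_companX.
  apply/eqP; rewrite subr_eq0 [X in _ == X]row_sum_delta; apply/eqP/eq_bigr => i _.
  by rewrite mxE.
apply/row_matrixP => i; rewrite row0 rowE -(delta_mx_companX i) -mulmxA.
have /mulmx_exp_intertwine CP : C *m horner_mx C P = horner_mx C P *m C.
  have CX : C = horner_mx C 'X by rewrite horner_mx_X.
  by rewrite !mulmxE {1 4}CX -!rmorphM mulrC.
by rewrite CP mulmxA row0_root mul0mx.
Qed.

Lemma compan_krylov n (M : 'M[F]_n.+1) (v : 'rV[F]_n.+1) :
  horner_mx M P = 0 -> C *m krylov_mx N.+1 v M = krylov_mx N.+1 v M *m M.
Proof.
move=> PM0; apply/row_matrixP => i; rewrite !row_mul rowK.
have [lt_iN | ge_iN] := ltnP i N.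
  by rewrite (row_compan lt_iN) -rowE rowK exprSr -mulmxE mulmxA.
have -> : i = ord_max by apply: val_inj; apply/eqP; rewrite eqn_leq ge_iN -ltnS ltn_ord.
rewrite row_compan_max mulNmx mulmx_sum_row -mulmxA mulmxE -exprSr.
move/eqP: PM0; rewrite horner_mx_monic addrC addr_eq0 => /eqP ->.
rewrite mulmxN mulmx_sumr; congr (- _); apply: eq_bigr => j _.
by rewrite mxE rowK scalemxAr.
Qed.

Lemma krylov_compan_row_free (v : 'rV[F]_N.+1) :
  irreducible_poly P -> v != 0 -> row_free (krylov_mx N.+1 v C).
Proof.
move=> P_irr v_neq0; apply: inj_row_free => c cW0.
set s := \poly_(i < N.+1) c 0 (inord i).
have vs0 : v *m horner_mx C s = 0.
  rewrite horner_mx_poly mulmx_sumr -[RHS]cW0 mulmx_sum_row; apply: eq_bigr => i _.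
  by rewrite rowK scalemxAr inord_val.
apply/eqP; apply: contraT => c_neq0.
have s_neq0 : s != 0.
  apply: contraNneq c_neq0 => s0; apply/eqP/rowP => i.
  by have := congr1 (fun q : {poly F} => q`_i) s0; rewrite coef_poly ltn_ord coef0 inord_val !mxE.
have /Bezout_coprimepP[[u1 u2] /=] : coprimep P s.
  by rewrite irredp_coprimep_small // size_P ltnS size_poly.
rewrite -size_poly_eq1 => /size_poly1P[c0 c0_neq0 Dc0].
have := congr1 (horner_mx C) Dc0; rewrite horner_mx_C rmorphD !rmorphM /= compan_root.
rewrite mulr0 add0r => Dc0M.
have : v *m c0%:M = 0 by rewrite -Dc0M -rmorphM mulrC rmorphM -mulmxE mulmxA vs0 mul0mx.
by rewrite mul_mx_scalar => /eqP; rewrite scaler_eq0 (negPf c0_neq0) (negPf v_neq0).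
Qed.

Lemma compan_irr (gT : finGroupType) (G : {group gT}) (rG : mx_representation F G N.+1) g :
  irreducible_poly P -> g \in G -> rG g = C -> mx_irreducible rG.
Proof.
move=> P_irr Gg rGg; apply/mx_irrP; split=> // U modU U_neq0.
set v := nz_row U; have v_neq0 : v != 0 by rewrite nz_row_eq0.
have sub_vC k : (v *m C ^+ k <= U)%MS.
  have UC : (U *m C <= U)%MS by rewrite -rGg (mxmoduleP modU).
  elim: k => [|k IH]; first by rewrite expr0 mulmx1 nz_row_sub.
  by rewrite exprSr -mulmxE mulmxA (submx_trans (submxMr C IH)).
rewrite /row_full eqn_leq rank_leq_col -{1}(eqP (krylov_compan_row_free P_irr v_neq0)).
by rewrite mxrankS //; apply/row_subP => i; rewrite rowK sub_vC.
Qed.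

End Companion.

Lemma mx_rsim_of_intertwine (F : fieldType) (gT : finGroupType) (G : {group gT}) n1 n2
    (rG1 : mx_representation F G n1) (rG2 : mx_representation F G n2) (f : 'M[F]_(n1, n2)) :
  mx_irreducible rG1 -> mx_irreducible rG2 -> f != 0 ->
  {in G, forall x, rG1 x *m f = f *m rG2 x} -> mx_rsim rG1 rG2.
Proof.
move=> /mx_irrP[_ irr1] /mx_irrP[_ irr2] f_neq0 hom_f.
have f_free : row_free f.
  rewrite -kermx_eq0; apply: contraT => ker_neq0.
  have modK : mxmodule rG1 (kermx f).
    apply/mxmoduleP => x Gx; apply/sub_kermxP.
    by rewrite -mulmxA hom_f // mulmxA mulmx_ker mul0mx.
  have := irr1 _ modK ker_neq0; rewrite -sub1mx => /sub_kermxP.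
  by rewrite mul1mx => f0; rewrite f0 eqxx in f_neq0.
have f_full : row_full <<f>>%MS.
  apply: irr2; last by rewrite -mxrank_eq0 mxrank_gen mxrank_eq0.
  rewrite (eqmx_module _ (genmxE f)); apply/mxmoduleP => x Gx.
  by rewrite -hom_f // submxMl.
have n12 : n1 = n2 by rewrite -(eqP f_free) -mxrank_gen (eqP f_full).
by exists f.
Qed.

Section TrivialRepresentation.
Variables (F : fieldType) (gT : finGroupType) (G : {group gT}).

Lemma triv_mx_repr n : mx_repr G (fun _ : gT => 1%:M : 'M[F]_n).
Proof. by split=> // x y _ _; rewrite mulmx1. Qed.

Definition triv_repr n := MxRepresentation (triv_mx_repr n).

Lemma triv_repr_irr n : mx_irreducible (triv_repr n) -> n = 1%N.
Proof.
case: n => [/mx_irrP[] // | n /mx_irrP[_ irr]].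
pose U : 'M[F]_n.+1 := delta_mx 0 0.
have modU : mxmodule (triv_repr n.+1) U by apply/mxmoduleP => x _; rewrite mulmx1.
have U_neq0 : U != 0 by rewrite -mxrank_eq0 mxrank_delta.
by have := irr _ modU U_neq0; rewrite /row_full mxrank_delta => /eqP <-.
Qed.

End TrivialRepresentation.

Section DirectProductOfCycles.
Variables (F : fieldType) (gT : finGroupType) (G : {group gT}) (a b : gT).
Hypothesis defG : (<[a]> \x <[b]>)%g = G.

Lemma mem_dprod_cycle_l : a \in G.
Proof. by rewrite -cycle_subG normal_sub // (dprod_normal2 defG).1. Qed.

Lemma mem_dprod_cycle_r : b \in G.
Proof. by rewrite -cycle_subG normal_sub // (dprod_normal2 defG).2. Qed.

Lemma abelian_dprod_cycle : abelian G.
Proof.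
have [_ <- cab _] := dprodP defG.
by rewrite abelianM !cycle_abelian.
Qed.

Lemma dprod_cycle_intertwine n1 n2 (rG1 : mx_representation F G n1.+1)
    (rG2 : mx_representation F G n2.+1) f :
  rG1 a *m f = f *m rG2 a -> rG1 b *m f = f *m rG2 b ->
  {in G, forall g, rG1 g *m f = f *m rG2 g}.
Proof.
move=> fa fb g Gg; have Ga := mem_dprod_cycle_l; have Gb := mem_dprod_cycle_r.
have /mulsgP[_ _ /cycleP[i ->] /cycleP[j ->] ->] : g \in (<[a]> * <[b]>)%g.
  by rewrite (dprodW defG).
rewrite !repr_mxM ?groupX // !repr_mxX // -mulmxA (mulmx_exp_intertwine _ fb).
by rewrite !mulmxA (mulmx_exp_intertwine _ fa).
Qed.

Lemma dprod_cycle_rsim n (rG1 rG2 : mx_representation F G n.+1) :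
  rG1 a = rG2 a -> rG1 b = rG2 b -> mx_rsim rG1 rG2.
Proof.
move=> eq_a eq_b; exists 1%:M; rewrite ?row_free_unit ?unitmx1 //.
by apply: dprod_cycle_intertwine; rewrite mul1mx mulmx1 ?eq_a ?eq_b.
Qed.

Section PowerRepresentation.
Variables (n q x y : nat) (C : 'M[F]_n.+1).
Hypotheses (q_gt0 : (0 < q)%N) (Cq : C ^+ q = 1).
Hypotheses (q_dvd_xa : (q %| x * #[a]%g)%N) (q_dvd_yb : (q %| y * #[b]%g)%N).

Local Notation Zq := 'I_q.-1.+1.

Let order_Zp1X k (g : gT) : (#[(Zp1 : Zq) ^+ k]%g %| #[g]%g)%N = (q %| k * #[g]%g)%N.
Proof. by rewrite order_dvdn -expgM -order_dvdn order_Zp1 prednK. Qed.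

Let fa := eltm_morphism (etrans (order_Zp1X x a) q_dvd_xa).
Let fb := eltm_morphism (etrans (order_Zp1X y b) q_dvd_yb).

Let fab : (fb @* <[b]> \subset 'C(fa @* <[a]>))%g.
Proof. exact: subset_trans (subsetT _) (centsS (subsetT _) (Zp_abelian _)). Qed.

Let Cmod k : C ^+ (k %% q.-1.+1) = C ^+ k.
Proof. by rewrite prednK // expr_modn. Qed.

Definition dprod_cycle_repr_fun (g : gT) : 'M[F]_n.+1 := C ^+ (dprodm defG fab g : Zq).

Lemma dprod_cycle_mx_repr : mx_repr G dprod_cycle_repr_fun.
Proof.
split=> [|g h Gg Gh]; first by rewrite /dprod_cycle_repr_fun morph1.
by rewrite /dprod_cycle_repr_fun morphM //= Cmod exprD.
Qed.

Definition dprod_cycle_repr := MxRepresentation dprod_cycle_mx_repr.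

Let val_Zp1X k : ((Zp1 : Zq) ^+ k)%g = (k %% q.-1.+1)%N :> nat.
Proof. by rewrite Zp_expg /= modnMml mul1n. Qed.

Lemma dprod_cycle_repr_l : dprod_cycle_repr a = C ^+ x.
Proof. by rewrite /= /dprod_cycle_repr_fun dprodmEl ?cycle_id //= eltm_id val_Zp1X Cmod. Qed.

Lemma dprod_cycle_repr_r : dprod_cycle_repr b = C ^+ y.
Proof. by rewrite /= /dprod_cycle_repr_fun dprodmEr ?cycle_id //= eltm_id val_Zp1X Cmod. Qed.

End PowerRepresentation.
End DirectProductOfCycles.

(* [pcompan p e] has totient (p ^ e.+1) rows, written as a successor because
   [horner_mx] and [repr_mxX] are stated for square matrices of size n.+1. *)
Definition pcompan_dim (p e : nat) := (totient (p ^ e.+1)).-1.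

Definition pcompan (p e : nat) : 'M[rat]_((pcompan_dim p e).+1) :=
  compan (pcompan_dim p e) (pcyclotomic p e).

Section PrimePowerCompanion.
Variables (p e : nat).
Hypotheses (p_pr : prime p) (p_gt2 : (2 < p)%N).

Lemma pcompan_dimS : (pcompan_dim p e).+1 = totient (p ^ e.+1).
Proof. by rewrite prednK // totient_gt0 expn_gt0 prime_gt0. Qed.

Lemma pcompan_dim_gt0 : (0 < pcompan_dim p e)%N.
Proof.
have p1_gt1 : (1 < p.-1)%N by rewrite -ltnS prednK ?prime_gt0.
rewrite -ltnS pcompan_dimS totient_pfactor //= (leq_trans p1_gt1) //.
by rewrite leq_pmulr ?expn_gt0 ?prime_gt0.
Qed.

Let size_pcyclotomicS : size (pcyclotomic p e) = (pcompan_dim p e).+2.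
Proof. by rewrite pcompan_dimS size_pcyclotomic. Qed.

Lemma pcompan_root : horner_mx (pcompan p e) (pcyclotomic p e) = 0.
Proof. exact: compan_root (pcyclotomic_monic e p_pr) size_pcyclotomicS. Qed.

Lemma pcompan_order : pcompan p e ^+ (p ^ e.+1) = 1.
Proof. by apply/eqP; rewrite -subr_eq0 -horner_mx_pcyclotomic pcompan_root mulr0. Qed.

Lemma pcompan_order_neq1 : pcompan p e ^+ (p ^ e) != 1.
Proof.
have lt_pe : (p ^ e < (pcompan_dim p e).+1)%N.
  rewrite pcompan_dimS totient_pfactor //= -{1}[(p ^ e)%N]mul1n ltn_mul2r expn_gt0.
  by rewrite prime_gt0 //= -ltnS prednK ?prime_gt0.
have pe_neq0 : (0 : 'I_(pcompan_dim p e).+1) != Ordinal lt_pe.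
  by rewrite -val_eqE /= eq_sym -lt0n expn_gt0 prime_gt0.
apply/eqP => C1; have := delta_mx_companX (pcyclotomic p e) (Ordinal lt_pe).
rewrite /= -/(pcompan p e) C1 mulmx1 => /matrixP/(_ 0 0)/eqP.
by rewrite !mxE eqxx (negPf pe_neq0) oner_eq0.
Qed.

Lemma pcompan_expr_eq1 k : (pcompan p e ^+ k == 1) = (p ^ e.+1 %| k)%N.
Proof. exact: expr_pfactor_eq1 p_pr pcompan_order pcompan_order_neq1. Qed.

Lemma pcompan_irr (gT : finGroupType) (G : {group gT})
    (rG : mx_representation rat G (pcompan_dim p e).+1) g :
  g \in G -> rG g = pcompan p e -> mx_irreducible rG.
Proof.
apply: (compan_irr (pcyclotomic_monic e p_pr) size_pcyclotomicS).
exact: pcyclotomic_irreducible.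
Qed.

Lemma centgmx_pcyclotomic_root (gT : finGroupType) (G : {group gT}) n
    (rG : mx_representation rat G n.+1) M :
    mx_irreducible rG -> centgmx rG M -> M ^+ (p ^ e.+1) = 1 -> M ^+ (p ^ e) != 1 ->
  horner_mx M (pcyclotomic p e) = 0.
Proof.
move=> rG_irr /centgmxP cM Mq Mq'.
have unit_Mpe : M ^+ (p ^ e) - 1 \in unitmx.
  apply: (mx_Schur rG_irr); last by rewrite subr_eq0.
  apply/centgmxP => x Gx; rewrite mulmxBl mulmxBr mul1mx mulmx1.
  by rewrite (mulmx_exp_intertwine _ (cM x Gx)).
rewrite -[LHS](mulKmx unit_Mpe) mulmxE horner_mx_pcyclotomic Mq subrr.
by rewrite -mulmxE mulmx0.
Qed.

Lemma pcompan_intertwine (gT : finGroupType) (G : {group gT}) n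
    (rG : mx_representation rat G n.+1) M :
    mx_irreducible rG -> centgmx rG M -> M ^+ (p ^ e.+1) = 1 -> M ^+ (p ^ e) != 1 ->
  exists2 f : 'M_((pcompan_dim p e).+1, n.+1), f != 0 &
    forall k, pcompan p e ^+ k *m f = f *m M ^+ k.
Proof.
move=> rG_irr cM Mq Mq'; exists (krylov_mx _ (delta_mx 0 0 : 'rV_n.+1) M).
  by apply: krylov_mx_neq0; rewrite -mxrank_eq0 mxrank_delta.
move=> k; apply: mulmx_exp_intertwine.
apply: (compan_krylov (pcyclotomic_monic e p_pr) size_pcyclotomicS).
exact: centgmx_pcyclotomic_root rG_irr cM Mq Mq'.
Qed.

End PrimePowerCompanion.

Lemma totient_pfactorS_inj p e1 e2 : prime p ->
  totient (p ^ e1.+1) = totient (p ^ e2.+1) -> e1 = e2.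
Proof.
move=> p_pr; rewrite !totient_pfactor //= => /eqP.
rewrite eqn_pmul2l ?eqn_exp2l ?prime_gt1 // => [/eqP // |].
by rewrite -ltnS prednK ?prime_gt0 ?prime_gt1.
Qed.

Section Classification.
Variables (gT : finGroupType) (G : {group gT}) (a b : gT) (p n m : nat).
Hypotheses (defG : (<[a]> \x <[b]>)%g = G) (p_pr : prime p) (p_odd : odd p).
Hypotheses (le_mn : (m <= n)%N) (oa : #[a]%g = (p ^ n)%N) (ob : #[b]%g = (p ^ m)%N).

Let p_gt2 := odd_prime_gt2 p_odd p_pr.
Let Ga := mem_dprod_cycle_l defG.
Let Gb := mem_dprod_cycle_r defG.

Let pexp_gt0 k : (0 < p ^ k)%N.
Proof. by rewrite expn_gt0 prime_gt0. Qed.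

Let repr_a_order d (rG : mx_representation rat G d.+1) : rG a ^+ (p ^ n) = 1.
Proof. by rewrite -oa -repr_mxX // expg_order repr_mx1. Qed.

Let repr_b_order d (rG : mx_representation rat G d.+1) : rG b ^+ (p ^ m) = 1.
Proof. by rewrite -ob -repr_mxX // expg_order repr_mx1. Qed.

Let centgmx_repr d (rG : mx_representation rat G d) g : g \in G -> centgmx rG (rG g).
Proof.
move=> Gg; apply/centgmxP => x Gx.
by rewrite -!repr_mxM // (centsP (abelian_dprod_cycle defG) g Gg x Gx).
Qed.

Lemma irr_repr_cyclic_image d (rG : mx_representation rat G d.+1) : mx_irreducible rG ->
  (exists k, rG b = rG a ^+ k) \/ (exists k, rG a = rG b ^+ k).
Proof.
move=> rG_irr; set K := rker_group rG; have nKG := rker_norm rG.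
have Q_cyclic : cyclic (G / K)%g.
  apply: mx_faithful_irr_abelian_cyclic (kquo_mx_faithful rG) _ _.
    exact: (quo_mx_irr (subxx _) nKG).2 rG_irr.
  exact: quotient_abelian (abelian_dprod_cycle defG).
have coset_order g k : g \in G -> #[g]%g = (p ^ k)%N -> exists i, #[coset K g]%g = (p ^ i)%N.
  move=> Gg og; have /(dvdn_pfactor _ _ p_pr)[i _ ->] : (#[coset K g]%g %| p ^ k)%N.
    by rewrite -og (morph_order (coset_morphism K) (subsetP nKG _ Gg)).
  by exists i.
have [[i oa'] [j ob']] := (coset_order _ _ Ga oa, coset_order _ _ Gb ob).
have sub_cycles g h : g \in G -> h \in G -> (#[coset K g]%g %| #[coset K h]%g)%N ->
    exists k, rG g = rG h ^+ k.
  move=> Gg Gh; rewrite !orderE (cardSg_cyclic Q_cyclic) ?cycle_subG ?mem_quotient //.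
  case/cycleP => k Dk; exists k.
  by rewrite -(kquo_repr_coset rG Gg) Dk repr_mxX ?mem_quotient // kquo_repr_coset.
have [le_ij | le_ji] := leqP i j.
  by right; apply: sub_cycles; rewrite // oa' ob' dvdn_exp2l.
by left; apply: sub_cycles; rewrite // oa' ob' dvdn_exp2l // ltnW.
Qed.

Lemma irr_repr_generator d (rG : mx_representation rat G d.+1) : (0 < d)%N ->
    mx_irreducible rG ->
  exists M i j e, [/\ centgmx rG M, rG a = M ^+ i, rG b = M ^+ j,
    (i == 1%N) || (j == 1%N) & M ^+ (p ^ e.+1) = 1 /\ M ^+ (p ^ e) != 1].
Proof.
move=> d_gt0 rG_irr.
have [M [i [j [cM DA DB ij1 Mpn]]]] : exists M i j, [/\ centgmx rG M, rG a = M ^+ i,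
    rG b = M ^+ j, (i == 1%N) || (j == 1%N) & M ^+ (p ^ n) = 1].
  have Bpn : rG b ^+ (p ^ n) = 1.
    by apply: expr_dvdn_eq1 (repr_b_order rG) _; rewrite dvdn_exp2l.
  case: (irr_repr_cyclic_image rG_irr) => [[k Bk] | [k Ak]].
    by exists (rG a), 1%N, k; rewrite expr1 eqxx centgmx_repr.
  by exists (rG b), k, 1%N; rewrite expr1 eqxx orbT centgmx_repr.
have M_neq1 : M != 1.
  apply/eqP => M1; have := dprod_cycle_rsim defG (rG1 := rG) (rG2 := triv_repr rat G d.+1).
  rewrite DA DB M1 !expr1n => /(_ erefl erefl)/mx_rsim_irr/(_ rG_irr)/triv_repr_irr.
  by move=> [d0]; rewrite d0 in d_gt0.
have [e [Mq Mq']] := exists_pfactor_order Mpn M_neq1.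
by exists M, i, j, e.
Qed.

Definition pcompan_repr e i j (hi : (p ^ e.+1 %| i * #[a]%g)%N) (hj : (p ^ e.+1 %| j * #[b]%g)%N) :=
  dprod_cycle_repr defG (pexp_gt0 e.+1) (pcompan_order e p_pr) hi hj.

Lemma pcompan_repr_irr e i j hi hj :
  (i == 1%N) || (j == 1%N) -> mx_irreducible (@pcompan_repr e i j hi hj).
Proof.
case/orP=> /eqP ij1; [apply: pcompan_irr Ga _ | apply: pcompan_irr Gb _] => //.
  by rewrite dprod_cycle_repr_l ij1 expr1.
by rewrite dprod_cycle_repr_r ij1 expr1.
Qed.

Lemma pcompan_repr_rsim e i j hi hj d (rG : mx_representation rat G d.+1) f :
    mx_irreducible rG -> (i == 1%N) || (j == 1%N) -> f != 0 ->
    pcompan p e ^+ i *m f = f *m rG a -> pcompan p e ^+ j *m f = f *m rG b ->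
  mx_rsim (@pcompan_repr e i j hi hj) rG.
Proof.
move=> rG_irr ij1 f_neq0 fa fb.
apply: mx_rsim_of_intertwine (pcompan_repr_irr _ _ ij1) rG_irr f_neq0 _.
by apply: (dprod_cycle_intertwine defG); rewrite ?dprod_cycle_repr_l ?dprod_cycle_repr_r.
Qed.

Lemma pcompan_repr_ker e i j hi hj u v :
  ((a ^+ u * b ^+ v)%g \in rker (@pcompan_repr e i j hi hj)) = (p ^ e.+1 %| i * u + j * v)%N.
Proof.
have [Gau Gbv] : (a ^+ u)%g \in G /\ (b ^+ v)%g \in G by rewrite !groupX.
rewrite !inE groupM // mul1mx repr_mxM // !repr_mxX //.
rewrite dprod_cycle_repr_l dprod_cycle_repr_r -!exprM mulmxE -exprD.
exact: pcompan_expr_eq1.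
Qed.

Lemma irr_repr_generator_order e (rG : mx_representation rat G (pcompan_dim p e).+1)
    M i j R :
    mx_irreducible rG -> centgmx rG M -> rG a = M ^+ i -> rG b = M ^+ j ->
    (i == 1%N) || (j == 1%N) -> M ^+ (p ^ R.+1) = 1 -> M ^+ (p ^ R) != 1 ->
  R = e.
Proof.
move=> rG_irr cM DA DB ij1 Mq Mq'.
have hi : (p ^ R.+1 %| i * #[a]%g)%N.
  by rewrite oa -(expr_pfactor_eq1 _ p_pr Mq Mq') exprM -DA repr_a_order.
have hj : (p ^ R.+1 %| j * #[b]%g)%N.
  by rewrite ob -(expr_pfactor_eq1 _ p_pr Mq Mq') exprM -DB repr_b_order.
have [f f_neq0 fM] := pcompan_intertwine p_pr rG_irr cM Mq Mq'.
have fA : pcompan p R ^+ i *m f = f *m rG a by rewrite DA fM.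
have fB : pcompan p R ^+ j *m f = f *m rG b by rewrite DB fM.
move/mxrank_rsim: (pcompan_repr_rsim hi hj rG_irr ij1 f_neq0 fA fB).
by rewrite !pcompan_dimS // => /totient_pfactorS_inj->.
Qed.

Lemma irr_repr_normal_form e (rG : mx_representation rat G (pcompan_dim p e).+1) :
    mx_irreducible rG ->
  (exists j, [/\ (j < p ^ e.+1)%N, (p ^ e.+1 %| j * p ^ m)%N &
     exists2 f, f != 0 & pcompan p e *m f = f *m rG a /\ pcompan p e ^+ j *m f = f *m rG b])
  \/ (exists k, [/\ (k < p ^ e)%N, (e.+1 <= m)%N &
     exists2 f, f != 0 & pcompan p e ^+ (p * k) *m f = f *m rG a /\ pcompan p e *m f = f *m rG b]).
Proof.
move=> rG_irr.
have [M [i [j [R [cM DA DB ij1 [Mq Mq']]]]]] :=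
  irr_repr_generator (pcompan_dim_gt0 e p_pr p_gt2) rG_irr.
have eR := irr_repr_generator_order rG_irr cM DA DB ij1 Mq Mq'; subst R.
have [[Aq Aq' [y lt_yq By]] | [DB' [k lt_kpe Ak]]] :=
  pfactor_cyclic_normal_form p_pr Mq Mq' DA DB ij1.
  left; exists y; split=> //.
    by rewrite -(expr_pfactor_eq1 _ p_pr Aq Aq') exprM -By repr_b_order.
  have [f f_neq0 fA] := pcompan_intertwine p_pr rG_irr (centgmx_repr rG Ga) Aq Aq'.
  by exists f; rewrite // -[pcompan p e]expr1 !fA -By.
right; exists k; split=> //.
  rewrite -(dvdn_Pexp2l _ _ (prime_gt1 p_pr)) -(expr_pfactor_eq1 _ p_pr Mq Mq').
  by rewrite -DB' repr_b_order.
have [f f_neq0 fB] := pcompan_intertwine p_pr rG_irr cM Mq Mq'.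
by exists f; rewrite // -[pcompan p e]expr1 !fB -DB' -Ak.
Qed.

(* Member i of the family is a |-> C^(xs i), b |-> C^(ys i); by [pcompan_repr_ker]
   the fourth hypothesis says that the members have pairwise distinct kernels. *)
Lemma irr_count_pcompan_family e N (xs ys : 'I_N -> nat) :
    (e.+1 <= n)%N -> (forall i, p ^ e.+1 %| ys i * p ^ m)%N ->
    (forall i, (xs i == 1%N) || (ys i == 1%N)) ->
    (forall i i', (forall u v, p ^ e.+1 %| xs i * u + ys i * v =
                               (p ^ e.+1 %| xs i' * u + ys i' * v))%N -> i = i') ->
    (forall j, j < p ^ e.+1 -> p ^ e.+1 %| j * p ^ m -> exists i, xs i = 1 /\ ys i = j)%N ->
    (forall k, k < p ^ e -> e.+1 <= m -> exists i, xs i = p * k /\ ys i = 1)%N ->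
  irr_count_of_degree rat G (totient (p ^ e.+1)) N.
Proof.
move=> le_en q_dvd_ys xy1 kerP cover_l cover_r; rewrite -(pcompan_dimS e p_pr).
have q_dvd_xa i : (p ^ e.+1 %| xs i * #[a]%g)%N by rewrite oa dvdn_mull // dvdn_exp2l.
have q_dvd_yb i : (p ^ e.+1 %| ys i * #[b]%g)%N by rewrite ob.
exists (fun i => pcompan_repr (q_dvd_xa i) (q_dvd_yb i)); split=> [i | i i' | rG rG_irr].
- exact: pcompan_repr_irr.
- by move/rker_mx_rsim => ker_eq; apply: kerP => u v; rewrite -!pcompan_repr_ker ker_eq.
have [[j [lt_j q_dvd_j [f f_neq0 [fa fb]]]] | [k [lt_k le_em [f f_neq0 [fa fb]]]]] :=
  irr_repr_normal_form rG_irr.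
  have [i [xi yi]] := cover_l j lt_j q_dvd_j; exists i; apply: mx_rsim_sym.
  by apply: pcompan_repr_rsim rG_irr (xy1 i) f_neq0 _ _; rewrite ?xi ?yi ?expr1.
have [i [xi yi]] := cover_r k lt_k le_em; exists i; apply: mx_rsim_sym.
by apply: pcompan_repr_rsim rG_irr (xy1 i) f_neq0 _ _; rewrite ?xi ?yi ?expr1.
Qed.

Lemma irr_count_pcompan_le e : (e.+1 <= m)%N ->
  irr_count_of_degree rat G (totient (p ^ e.+1)) (p ^ e.+1 + p ^ e).
Proof.
move=> le_em; set q := (p ^ e.+1)%N; have qE : q = (p * p ^ e)%N by rewrite /q expnS.
pose xs (i : 'I_(q + p ^ e)) := if (i < q)%N then 1%N else (p * (i - q))%N.
pose ys (i : 'I_(q + p ^ e)) := if (i < q)%N then i : nat else 1%N.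
apply: (@irr_count_pcompan_family e _ xs ys).
- exact: leq_trans le_em le_mn.
- by move=> i; rewrite dvdn_mull // dvdn_exp2l.
- by move=> i; rewrite /xs /ys; case: ifP; rewrite eqxx ?orbT.
- move=> i i'; rewrite /xs /ys.
  have lt_pq l : (l < q + p ^ e)%N -> (q <= l)%N -> (p * (l - q) < q)%N.
    by move=> lt_l le_ql; rewrite [X in (_ < X)%N]qE ltn_pmul2l ?prime_gt0 // ltn_subLR.
  have q_ndvd_pe : ~~ (q %| p ^ e)%N by rewrite dvdn_Pexp2l ?prime_gt1 // ltnn.
  have q_dvd_ppe l : (q %| p * l * p ^ e)%N by rewrite mulnAC -qE dvdn_mulr.
  case: (ltnP i q) => iq; case: (ltnP i' q) => i'q /= ker_eq; apply: ord_inj.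
  + by apply: dvdn_addl_inj iq i'q _ => u; have := ker_eq u 1%N; rewrite !mul1n !muln1.
  (* a^(p^e) lies in the kernel of the representations (p k, 1) only. *)
  + by move: (ker_eq (p ^ e)%N 0%N); rewrite !muln0 !addn0 mul1n q_dvd_ppe (negPf q_ndvd_pe).
  + by move: (ker_eq (p ^ e)%N 0%N); rewrite !muln0 !addn0 mul1n q_dvd_ppe (negPf q_ndvd_pe).
  have lt_i := lt_pq _ (ltn_ord i) iq; have lt_i' := lt_pq _ (ltn_ord i') i'q.
  have /eqP : (p * (i - q) = p * (i' - q))%N.
    apply: dvdn_addl_inj lt_i lt_i' _ => v.
    by have := ker_eq 1%N v; rewrite !muln1 !mul1n !(addnC v).
  by rewrite eqn_pmul2l ?prime_gt0 // => /eqP eq_sub; rewrite -(subnK iq) -(subnK i'q) eq_sub.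
- by move=> j lt_jq _; exists (Ordinal (ltn_addr _ lt_jq)); rewrite /xs /ys /= lt_jq.
move=> k lt_k _; have lt_qk : (q + k < q + p ^ e)%N by rewrite ltn_add2l.
by exists (Ordinal lt_qk); rewrite /xs /ys /= ltnNge leq_addr /= addKn.
Qed.

Lemma irr_count_pcompan_gt e : (m < e.+1 <= n)%N ->
  irr_count_of_degree rat G (totient (p ^ e.+1)) (p ^ m).
Proof.
case/andP=> lt_me le_en; set q := (p ^ e.+1)%N; set k := (p ^ (e.+1 - m))%N.
have qE : q = (k * p ^ m)%N by rewrite /k -expnD subnK // ltnW.
pose ys (i : 'I_(p ^ m)) := (k * i)%N.
have lt_ys i : (ys i < q)%N by rewrite qE ltn_pmul2l ?pexp_gt0.
apply: (@irr_count_pcompan_family e _ (fun=> 1%N) ys) => //.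
- by move=> i; rewrite /ys mulnAC -qE dvdn_mulr.
- move=> i i' ker_eq; apply/ord_inj/eqP; rewrite -(eqn_pmul2l (pexp_gt0 (e.+1 - m))).
  apply/eqP/(dvdn_addl_inj (lt_ys i) (lt_ys i')) => u.
  by have := ker_eq u 1%N; rewrite !mul1n !muln1.
- move=> j lt_jq; rewrite -/q qE dvdn_pmul2r ?pexp_gt0 // => /dvdnP[c Dj].
  have lt_c : (c < p ^ m)%N by rewrite -(ltn_pmul2r (pexp_gt0 (e.+1 - m))) -Dj mulnC -qE.
  by exists (Ordinal lt_c); rewrite /ys Dj mulnC.
by move=> c _ le_em; rewrite leqNgt lt_me in le_em.
Qed.

Lemma irr_count_linear : irr_count_of_degree rat G 1 1.
Proof.
exists (fun=> triv_repr rat G 1); split=> [_ | i i' _ | rG _].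
- exact/mx_abs_irrW/linear_mx_abs_irr.
- by rewrite !ord1.
have odd_pX k : odd (p ^ k) by rewrite oddX p_odd orbT.
exists ord0; apply: (dprod_cycle_rsim defG); apply: mx11_odd_expr_eq1 (odd_pX _) _.
  exact: repr_a_order.
exact: repr_b_order.
Qed.

End Classification.

Local Close Scope ring_scope.

Lemma sum_totient_pfactor p r : prime p -> \sum_(k < r.+1) totient (p ^ k) = p ^ r.
Proof.
move=> p_pr; elim: r => [|r IH]; first by rewrite big_ord1 expn0.
rewrite big_ord_recr /= IH totient_pfactor //= expnS -{1}[(p ^ r)%N]mul1n -mulnDl add1n.
by rewrite prednK ?prime_gt0.
Qed.

Theorem proposition2p3 (p n m : nat) (gT : finGroupType) (G : {group gT})
    (a b : gT) :
  prime p -> odd p -> 0 < m -> m <= n ->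
  (<[a]> \x <[b]>)%g = G -> #[a]%g = p ^ n -> #[b]%g = p ^ m ->
  [/\ irr_count_of_degree rat G 1 1,
      forall r, 1 <= r <= m ->
        irr_count_of_degree rat G (totient (p ^ r))
          (2 * (\sum_(k < r) totient (p ^ k)) + totient (p ^ r))
        /\ 2 * (\sum_(k < r) totient (p ^ k)) + totient (p ^ r)
           = p ^ r + p ^ r.-1
    & forall r, m < r <= n ->
        irr_count_of_degree rat G (totient (p ^ r))
          (\sum_(k < m.+1) totient (p ^ k))
        /\ \sum_(k < m.+1) totient (p ^ k) = p ^ m].
Proof.
move=> p_pr p_odd _ le_mn defG oa ob; split.
- exact: irr_count_linear defG p_odd oa ob.
- case=> [|e] // /andP[_ le_em]; rewrite sum_totient_pfactor //.
  have -> : 2 * p ^ e + totient (p ^ e.+1) = p ^ e.+1 + p ^ e.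
    rewrite totient_pfactor //= -mulnDl add2n prednK ?prime_gt0 //.
    by rewrite mulSn expnS addnC.
  by split=> //; apply: (irr_count_pcompan_le defG p_pr p_odd le_mn oa ob le_em).
case=> [|e] // le_m_en; rewrite sum_totient_pfactor //.
by split=> //; apply: (irr_count_pcompan_gt defG p_pr p_odd le_mn oa ob le_m_en).
Qed.
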